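(* Let $\lambda>0$ and let $H_3=\mathbb{R}^3$ with coordinates $(x,y,z)$ carry the Lorentzian metric $g_2=\frac{1}{\lambda^2}dx^2+dy^2-(x\,dy+dz)^2$, with Levi-Civita connection $\nabla$. Let $e_1=\partial_y-x\partial_z$, $e_2=\lambda\partial_x$, $e_3=\partial_z$, and let $V_2=\partial_y\,(=e_1+xe_3)$. Then every $V_2$-magnetic curve $\gamma(t)=(x(t),y(t),z(t))$, i.e. every smooth curve with $\nabla_{\gamma'}\gamma'=V_2\wedge\gamma'$, satisfies the system $y''-x'(z'+xy')=-\frac{xx'}{\lambda}$, $(\lambda y'+1)(z'+xy')=xy'-\frac{x''}{\lambda}$, $(z'+xy')'=-\frac{x'}{\lambda}$.
   Context: $(e_1,e_2,e_3)$ is a $g_2$-orthonormal frame with $e_3$ timelike. For $X=\sum X^ie_i$, $Y=\sum Y^ie_i$ the vector product is defined in this frame by $X\wedge Y=(X^2Y^3-X^3Y^2)e_1+(X^3Y^1-X^1Y^3)e_2+(X^2Y^1-X^1Y^2)e_3$. Primes denote derivatives in $t$. *)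

From Stdlib Require Import Reals Lra.
From Coquelicot Require Import Coquelicot.
Open Scope R_scope.

Inductive idx := IX | IY | IZ.

(* Points of R^3 and tangent vectors (components in the coordinate basis
   d/dx, d/dy, d/dz) are functions idx -> R. *)
Definition pt := idx -> R.

Definition sum3 (f : idx -> R) : R := f IX + f IY + f IZ.

(* The Lorentzian metric g_2 = (1/lambda^2) dx^2 + dy^2 - (x dy + dz)^2,
   in coordinates:  g_xx = 1/lambda^2, g_yy = 1 - x^2, g_yz = g_zy = -x,
   g_zz = -1, all other components 0. *)
Definition g2 (lam : R) (p : pt) (i j : idx) : R :=
  let x := p IX in
  match i, j with
  | IX, IX => 1 / lam ^ 2
  | IY, IY => 1 - x ^ 2
  | IY, IZ => - x
  | IZ, IY => - x
  | IZ, IZ => -1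
  | _, _ => 0
  end.

Definition g2inv (lam : R) (p : pt) (i j : idx) : R :=
  let x := p IX in
  match i, j with
  | IX, IX => lam ^ 2
  | IY, IY => 1
  | IY, IZ => - x
  | IZ, IY => - x
  | IZ, IZ => x ^ 2 - 1
  | _, _ => 0
  end.

Definition idx_eqb (i j : idx) : bool :=
  match i, j with
  | IX, IX | IY, IY | IZ, IZ => true
  | _, _ => false
  end.

Definition kron (i j : idx) : R := if idx_eqb i j then 1 else 0.

Lemma g2inv_correct (lam : R) (p : pt) (i j : idx) :
  lam <> 0 -> sum3 (fun l => g2inv lam p i l * g2 lam p l j) = kron i j.
Proof.
  intros H; destruct i, j; unfold sum3, g2inv, g2, kron; simpl; field; auto.
Qed.

Definition upd (p : pt) (i : idx) (s : R) : pt :=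
  fun j => if idx_eqb i j then s else p j.

Definition dg2 (lam : R) (p : pt) (i j l : idx) : R :=
  Derive (fun s => g2 lam (upd p i s) j l) (p i).

Definition Gamma (lam : R) (p : pt) (k i j : idx) : R :=
  / 2 * sum3 (fun l => g2inv lam p k l *
           (dg2 lam p i j l + dg2 lam p j i l - dg2 lam p l i j)).

Definition curve := R -> pt.

Definition vel (c : curve) (t : R) : pt := fun k => Derive (fun s => c s k) t.
Definition acc (c : curve) (t : R) : pt :=
  fun k => Derive (fun s => Derive (fun u => c u k) s) t.

Definition smooth_curve (c : curve) : Prop :=
  forall (k : idx) (n : nat) (t : R), ex_derive_n (fun s => c s k) n t.

Definition cov_acc (lam : R) (c : curve) (t : R) : pt :=
  fun k => acc c t k +
    sum3 (fun i => sum3 (fun j => Gamma lam (c t) k i j * vel c t i * vel c t j)).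

(* The frame e_1 = d_y - x d_z, e_2 = lambda d_x, e_3 = d_z
   (frame index 1,2,3 encoded as IX, IY, IZ). *)
Definition frame (lam : R) (p : pt) (a : idx) : pt :=
  let x := p IX in
  match a with
  | IX => fun k => match k with IX => 0 | IY => 1 | IZ => - x end
  | IY => fun k => match k with IX => lam | IY => 0 | IZ => 0 end
  | IZ => fun k => match k with IX => 0 | IY => 0 | IZ => 1 end
  end.

Definition of_frame (lam : R) (p : pt) (X : idx -> R) : pt :=
  fun k => sum3 (fun a => X a * frame lam p a k).

Definition to_frame (lam : R) (p : pt) (X : pt) : idx -> R :=
  fun a => match a with
  | IX => X IY
  | IY => X IX / lam
  | IZ => X IZ + p IX * X IY
  end.

Lemma to_frame_correct (lam : R) (p : pt) (X : pt) :
  lam <> 0 -> forall k, of_frame lam p (to_frame lam p X) k = X k.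
Proof.
  intros H k; destruct k; unfold of_frame, to_frame, sum3, frame; simpl; field; auto.
Qed.

Definition wedge_frame (X Y : idx -> R) : idx -> R :=
  fun a => match a with
  | IX => X IY * Y IZ - X IZ * Y IY
  | IY => X IZ * Y IX - X IX * Y IZ
  | IZ => X IY * Y IX - X IX * Y IY
  end.

Definition wedge (lam : R) (p : pt) (X Y : pt) : pt :=
  of_frame lam p (wedge_frame (to_frame lam p X) (to_frame lam p Y)).

Definition V2 : pt := fun k => match k with IY => 1 | _ => 0 end.

Definition magnetic_V2 (lam : R) (c : curve) : Prop :=
  smooth_curve c /\
  forall t k, cov_acc lam c t k = wedge lam (c t) V2 (vel c t) k.

(** The metric depends on [x] alone, so its Christoffel symbols are
    polynomials in [x] and [lambda], and the magnetic equation is an explicit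
    second-order system for [(x, y, z)].  Writing [w = z' + x y'] for the
    [e_3]-component of the velocity, the [y]- and [x]-equations are the first
    two identities, and differentiating [w] with the product rule and the
    [y]- and [z]-equations gives [w' = - x' / lambda]. *)

From Stdlib Require Import Reals Lra.
From Coquelicot Require Import Coquelicot.
Open Scope R_scope.

Lemma dg2E (lam : R) (p : pt) (i j l : idx) :
  dg2 lam p i j l =
  match i, j, l with
  | IX, IY, IY => -2 * p IX
  | IX, IY, IZ | IX, IZ, IY => -1
  | _, _, _ => 0
  end.
Proof.
  destruct i, j, l; unfold dg2, g2, upd; simpl;
    try apply Derive_const;
    apply is_derive_unique; auto_derive; auto; ring.
Qed.

Lemma GammaE (lam : R) (p : pt) (k i j : idx) :
  Gamma lam p k i j =
  let x := p IX in
  match k, i, j with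
  | IX, IY, IY => lam ^ 2 * x
  | IX, IY, IZ | IX, IZ, IY => lam ^ 2 / 2
  | IY, IX, IY | IY, IY, IX => - x / 2
  | IY, IX, IZ | IY, IZ, IX => - 1 / 2
  | IZ, IX, IY | IZ, IY, IX => (x ^ 2 + 1) / 2
  | IZ, IX, IZ | IZ, IZ, IX => x / 2
  | _, _, _ => 0
  end.
Proof.
  destruct k, i, j; unfold Gamma, sum3; rewrite !dg2E; unfold g2inv; simpl; field.
Qed.

Lemma cov_accE (lam : R) (c : curve) (t : R) (k : idx) :
  cov_acc lam c t k =
  let x := c t IX in
  let v := vel c t in
  let a := acc c t in
  match k with
  | IX => a IX + lam ^ 2 * v IY * (v IZ + x * v IY)
  | IY => a IY - v IX * (v IZ + x * v IY)
  | IZ => a IZ + ((x ^ 2 + 1) * v IY + x * v IZ) * v IX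
  end.
Proof.
  destruct k; unfold cov_acc, sum3; rewrite !GammaE; simpl; field.
Qed.

Lemma wedge_V2E (lam : R) (p X : pt) (k : idx) :
  wedge lam p V2 X k =
  let x := p IX in
  match k with
  | IX => - lam * X IZ
  | IY => - x * X IX / lam
  | IZ => (x ^ 2 - 1) * X IX / lam
  end.
Proof.
  destruct k; unfold wedge, of_frame, wedge_frame, to_frame, frame, V2, sum3;
    simpl; unfold Rdiv; ring.
Qed.

Lemma smooth_curve_ex_derive (c : curve) (k : idx) (t : R) :
  smooth_curve c -> ex_derive (fun s => c s k) t.
Proof. intros Hc; exact (Hc k 1%nat t). Qed.

Lemma smooth_curve_ex_derive_vel (c : curve) (k : idx) (t : R) :
  smooth_curve c -> ex_derive (fun s => vel c s k) t.
Proof. intros Hc; exact (Hc k 2%nat t). Qed.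

Section MagneticCurve.

Variables (lam : R) (c : curve).
Hypothesis lam_neq0 : lam <> 0.
Hypothesis c_magnetic : magnetic_V2 lam c.

Lemma magnetic_V2_ode (t : R) :
  let x := c t IX in
  let v := vel c t in
  let a := acc c t in
  a IX = - lam * v IZ - lam ^ 2 * v IY * (v IZ + x * v IY) /\
  a IY = v IX * (v IZ + x * v IY) - x * v IX / lam /\
  a IZ = ((x ^ 2 - 1) / lam - (x ^ 2 + 1) * v IY - x * v IZ) * v IX.
Proof.
  destruct c_magnetic as [_ Heq].
  pose proof (Heq t IX) as Ex; pose proof (Heq t IY) as Ey; pose proof (Heq t IZ) as Ez.
  rewrite cov_accE, wedge_V2E in Ex, Ey, Ez; simpl in Ex, Ey, Ez.
  repeat split; lra.
Qed.

Lemma Derive_vertical_velocity (t : R) :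
  Derive (fun s => vel c s IZ + c s IX * vel c s IY) t = - vel c t IX / lam.
Proof.
  destruct c_magnetic as [Hs _].
  rewrite Derive_plus, Derive_mult;
    auto using smooth_curve_ex_derive, smooth_curve_ex_derive_vel, ex_derive_mult.
  change (acc c t IZ + (vel c t IX * vel c t IY + c t IX * acc c t IY) =
          - vel c t IX / lam).
  destruct (magnetic_V2_ode t) as (_ & Ey & Ez); simpl in Ey, Ez.
  rewrite Ey, Ez; field; assumption.
Qed.

End MagneticCurve.

Theorem mainTheorem6 (lam : R) (c : curve) :
  0 < lam -> magnetic_V2 lam c ->
  forall t : R,
    let x := fun s => c s IX in
    let y := fun s => c s IY in
    let z := fun s => c s IZ in
    let x' := Derive x in
    let y' := Derive y in
    let z' := Derive z in
    let x'' := Derive x' in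
    let y'' := Derive y' in
    y'' t - x' t * (z' t + x t * y' t) = - (x t * x' t) / lam /\
    (lam * y' t + 1) * (z' t + x t * y' t) = x t * y' t - x'' t / lam /\
    Derive (fun s => z' s + x s * y' s) t = - x' t / lam.
Proof.
  intros Hlam Hc t x y z x' y' z' x'' y''.
  assert (Hlam0 : lam <> 0) by lra.
  destruct (magnetic_V2_ode lam c Hc t) as (Ex & Ey & _); simpl in Ex, Ey.
  change (acc c t IX) with (x'' t) in Ex.
  change (acc c t IY) with (y'' t) in Ey.
  change (vel c t IX) with (x' t) in Ex, Ey.
  change (vel c t IY) with (y' t) in Ex, Ey.
  change (vel c t IZ) with (z' t) in Ex, Ey.
  change (c t IX) with (x t) in Ex, Ey.
  split; [| split].
  - rewrite Ey; field; assumption.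
  - rewrite Ex; field; assumption.
  - exact (Derive_vertical_velocity lam c Hlam0 Hc t).
Qed.
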